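(* Fix a predicate $P:\{-1,+1\}^k\to\{0,1\}$, $\varepsilon\ge0$ and $0\le\delta\le1$. Suppose $M$ is an $(\varepsilon,\delta)$-differentially private algorithm that maps CSP instances with respect to $P$ on $n$ variables to assignments in $\{\pm1\}^n$. Then there exists a CSP instance $\Phi$ with respect to $P$ such that $$\mathbb E[\mathrm{val}_\Phi(M(\Phi))]\ \le\ 1+\delta-e^{-\varepsilon}(1-\mu(P)).$$ In particular, when $\varepsilon\le1$ and $\delta=0$, $\mathbb E[\mathrm{val}_\Phi(M(\Phi))]\le\mu(P)+O(\varepsilon)$; and when $\varepsilon\gg1$ and $\delta=0$, $\mathbb E[\mathrm{val}_\Phi(M(\Phi))]\le1-e^{-\varepsilon}$ (up to the term $e^{-\varepsilon}\mu(P)$, i.e. $1-\Theta(e^{-\varepsilon})$).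
   Context: A CSP instance with respect to $P$ over variables $x_1,\dots,x_n$ is a multiset of $P$-constraints $(c,S)$, where $S\in[n]^k$ is the scope and $c\in\{-1,1\}^k$ is the negation pattern; $(c,S)$ is satisfied by $x$ iff $P(c_1x_{S_1},\dots,c_kx_{S_k})=1$. $\mathrm{val}_\Phi(x)$ is the fraction of constraints of $\Phi$ satisfied by $x$. $\mu(P)$ is the probability that $P$ is satisfied by a uniformly random input. Two instances are neighboring if one is obtained from the other by adding or removing one constraint; $M$ is $(\varepsilon,\delta)$-DP if $\Pr[M(\Phi)\in T]\le e^\varepsilon\Pr[M(\Phi')\in T]+\delta$ for all neighboring $\Phi,\Phi'$ and all output sets $T$. *)

From mathcomp Require Import all_boot all_order all_algebra.
From mathcomp Require Import reals.
From mathcomp Require Import sequences exp.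
Set Implicit Arguments. Unset Strict Implicit. Unset Printing Implicit Defensive.
Import Order.TTheory GRing.Theory Num.Theory.
Local Open Scope ring_scope.

(* Signs {-1,+1} are encoded by bool via b |-> (-1)^b  (false = +1, true = -1);
   product of signs is then xor (addb). *)
Definition sign := bool.

Definition pred_k (k : nat) := {ffun {ffun 'I_k -> sign} -> bool}.

Definition assignment (n : nat) := {ffun 'I_n -> sign}.

(* A P-constraint (c, S): negation pattern c in {-1,1}^k and scope S in [n]^k. *)
Definition constraint (k n : nat) := ({ffun 'I_k -> sign} * {ffun 'I_k -> 'I_n})%type.

Definition satisfies (k n : nat) (P : pred_k k) (C : constraint k n)
    (x : assignment n) : bool :=
  P [ffun i => addb (C.1 i) (x (C.2 i))].

(* A CSP instance is a multiset of constraints, i.e. a multiplicity function. *)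
Definition instance (k n : nat) := {ffun constraint k n -> nat}.

Definition inst_size (k n : nat) (Phi : instance k n) : nat :=
  (\sum_(C : constraint k n) Phi C)%N.

Definition val (R : realType) (k n : nat) (P : pred_k k) (Phi : instance k n)
    (x : assignment n) : R :=
  (\sum_(C : constraint k n) (Phi C * satisfies P C x))%N%:R / (inst_size Phi)%:R.

Definition mu (R : realType) (k : nat) (P : pred_k k) : R :=
  #|[set y | P y]|%:R / (2 ^ k)%:R.

Definition add_constraint (k n : nat) (Phi : instance k n) (C : constraint k n)
    : instance k n := [ffun D => (Phi D + (D == C))%N].

Definition neighboring (k n : nat) (Phi Phi' : instance k n) : Prop :=
  exists C, Phi' = add_constraint Phi C \/ Phi = add_constraint Phi' C.

Definition is_distr (R : realType) (n : nat) (p : {ffun assignment n -> R}) : Prop :=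
  (forall x, 0 <= p x) /\ \sum_x p x = 1.

Definition prob (R : realType) (n : nat) (p : {ffun assignment n -> R})
    (T : {set assignment n}) : R := \sum_(x in T) p x.

Definition mechanism (R : realType) (k n : nat) :=
  instance k n -> {ffun assignment n -> R}.

Definition is_mechanism (R : realType) (k n : nat) (M : mechanism R k n) : Prop :=
  forall Phi, is_distr (M Phi).

Definition DP (R : realType) (k n : nat) (eps delta : R) (M : mechanism R k n) : Prop :=
  forall Phi Phi', neighboring Phi Phi' ->
    forall T : {set assignment n},
      prob (M Phi) T <= expR eps * prob (M Phi') T + delta.

Definition expected_val (R : realType) (k n : nat) (P : pred_k k)
    (M : mechanism R k n) (Phi : instance k n) : R :=
  \sum_x M Phi x * val R P Phi x.

From Pilot Require Import Defs.
From mathcomp Require Import all_boot all_order all_algebra.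
From mathcomp Require Import reals.
From mathcomp Require Import sequences exp.
Set Implicit Arguments. Unset Strict Implicit. Unset Printing Implicit Defensive.
Import Order.TTheory GRing.Theory Num.Theory.
Local Open Scope ring_scope.

(* Compare the empty instance with the 2^k one-constraint instances that share
   a scope and differ only in the negation pattern c.  For a fixed assignment
   x, the map c |-> (c_i x_{S_i})_i is a bijection of {-1,1}^k, so a
   constraint with a uniformly random pattern is violated by x with
   probability exactly 1 - mu(P).  Hence, whatever distribution M produces on
   the empty instance, some pattern c is violated with probability at least
   1 - mu(P) there; by differential privacy it is still violated with
   probability at least e^-eps (1 - mu(P) - delta) on the instance consisting
   of that single constraint; finally e^-eps delta <= delta. *)

Lemma exists_le_of_sum_le (R : realDomainType) (I : finType) (i0 : I)
    (F G : I -> R) :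
  \sum_i F i <= \sum_i G i -> exists i, F i <= G i.
Proof.
move=> sumFG; apply/existsP; apply: contraLR sumFG => /existsPn GltF.
rewrite -ltNge; apply: ltr_sum; first by apply/hasP; exists i0; rewrite ?mem_index_enum.
by move=> i _; rewrite ltNge GltF.
Qed.

Lemma prob_predC (R : realType) (n : nat) (p : {ffun assignment n -> R})
    (b : pred (assignment n)) :
  is_distr p -> prob p [set x | ~~ b x] = 1 - \sum_x p x * (b x)%:R.
Proof.
case=> _ sum_p1; rewrite /prob big_mkcond /= -[X in X - _]sum_p1 -sumrB.
by apply: eq_bigr => x _; rewrite inE; case: (b x); rewrite ?mulr1 ?mulr0 ?subrr ?subr0.
Qed.

Section SingleConstraint.
Variables (R : realType) (k n : nat) (P : pred_k k).

Definition empty_instance : instance k n := [ffun _ => 0%N].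

Definition single_instance (C : constraint k n) : instance k n :=
  add_constraint empty_instance C.

Lemma single_instance_neighboring (C : constraint k n) :
  neighboring empty_instance (single_instance C).
Proof. by exists C; left. Qed.

Lemma sum_single_instance (C : constraint k n) (F : constraint k n -> nat) :
  (\sum_D single_instance C D * F D = F C)%N.
Proof.
rewrite (bigD1 C) //= !ffunE eqxx big1 ?addn0 ?mul1n // => D /negbTE neqDC.
by rewrite !ffunE neqDC.
Qed.

Lemma inst_size_single (C : constraint k n) : inst_size (single_instance C) = 1%N.
Proof.
by rewrite /inst_size -(sum_single_instance C (fun=> 1%N)); apply: eq_bigr => D _; rewrite muln1.
Qed.

Lemma expected_val_single (M : mechanism R k n) (C : constraint k n) :
  expected_val P M (single_instance C)
  = \sum_x M (single_instance C) x * (satisfies P C x)%:R.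
Proof.
apply: eq_bigr => x _.
by rewrite /Defs.val inst_size_single divr1 sum_single_instance.
Qed.

Lemma card_patterns : #|{ffun 'I_k -> sign}| = (2 ^ k)%N.
Proof. by rewrite card_ffun card_bool card_ord. Qed.

Lemma sum_satisfies_patterns (S : {ffun 'I_k -> 'I_n}) (x : assignment n) :
  \sum_(c : {ffun 'I_k -> sign}) ((satisfies P (c, S) x)%:R : R)
  = (2 ^ k)%:R * mu R P.
Proof.
pose flip (c : {ffun 'I_k -> sign}) : {ffun 'I_k -> sign} :=
  [ffun i => addb (c i) (x (S i))].
have flipK : involutive flip by move=> c; apply/ffunP => i; rewrite !ffunE addbK.
rewrite (reindex_inj (inv_inj flipK)) /=.
under eq_bigr => c _ do rewrite /satisfies /= -/(flip (flip c)) flipK.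
rewrite /mu mulrC divfK ?pnatr_eq0 ?expn_eq0 // -sum1_card natr_sum [RHS]big_mkcond /=.
by apply: eq_bigr => y _; rewrite inE; case: (P y).
Qed.

Lemma sum_prob_violated_patterns (p : {ffun assignment n -> R})
    (S : {ffun 'I_k -> 'I_n}) :
  is_distr p ->
  \sum_c prob p [set x | ~~ satisfies P (c, S) x] = (2 ^ k)%:R * (1 - mu R P).
Proof.
move=> p_distr; under eq_bigr => c _ do rewrite prob_predC //.
rewrite sumrB sumr_const card_patterns exchange_big /=.
under eq_bigr => x _ do rewrite -mulr_sumr sum_satisfies_patterns.
by rewrite -mulr_suml p_distr.2 mul1r mulrBr mulr1 mulr_natl.
Qed.

Lemma exists_single_instance_DP (eps delta : R) (M : mechanism R k n)
    (S : {ffun 'I_k -> 'I_n}) :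
  is_mechanism M -> DP eps delta M ->
  exists c, 1 - mu R P
            <= expR eps * (1 - expected_val P M (single_instance (c, S))) + delta.
Proof.
move=> M_distr M_DP.
apply: (@exists_le_of_sum_le _ _ [ffun => false] (fun=> 1 - mu R P)).
rewrite sumr_const card_patterns -mulr_natl.
rewrite -(sum_prob_violated_patterns S (M_distr empty_instance)).
apply: ler_sum => c _.
rewrite expected_val_single -prob_predC //.
exact/M_DP/single_instance_neighboring.
Qed.

End SingleConstraint.

Theorem theorem6p1 (R : realType) (k n : nat) (P : pred_k k) (eps delta : R)
  (M : mechanism R k n) :
  (0 < n)%N -> 0 <= eps -> 0 <= delta -> delta <= 1 ->
  is_mechanism M -> DP eps delta M ->
  exists Phi : instance k n,
    (0 < inst_size Phi)%N /\
    expected_val P M Phi <= 1 + delta - expR (- eps) * (1 - mu R P).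
Proof.
move=> n_gt0 eps_ge0 delta_ge0 _ M_distr M_DP.
pose S : {ffun 'I_k -> 'I_n} := [ffun => Ordinal n_gt0].
have [c violated] := exists_single_instance_DP P S M_distr M_DP.
exists (single_instance (c, S)); split.
  by rewrite inst_size_single.
set v := expected_val _ _ _ in violated *.
have expRN_gt0 : 0 < expR (- eps) := expR_gt0 _.
have expRN_le1 : expR (- eps) <= 1 by rewrite expR_le1 oppr_le0.
have scaled : expR (- eps) * (1 - mu R P) <= 1 - v + expR (- eps) * delta.
  have := ler_wpM2l (ltW expRN_gt0) violated.
  by rewrite (mulrDr _ (expR eps * _)) mulrA -expRD addNr expR0 mul1r.
rewrite lerBrDr addrC -lerBrDr (le_trans scaled) // addrAC lerD2r lerD2l.
by rewrite ler_piMl.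
Qed.
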